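(* Let $X$ be an infinite Tychonoff space and let $E$ be a Banach space. If $T:C_p(X)\to E_w$ is a sequentially continuous linear operator, then for every sequence $\{U_n: n\in \omega\}$ of pairwise disjoint nonempty open subsets of $X$ there exists $N$ such that $T(f)=0$ for all $n\geqslant N$ and all $f\in C(X)$ with $\operatorname{supp}(f)\subset U_n$.
   Context: $C_p(X)$ is the space $C(X)$ of continuous real-valued functions on $X$ with the pointwise convergence topology; $E_w$ is $E$ with its weak topology. For $f:X\to\mathbb{R}$, $\operatorname{supp}(f)=\{t\in X: f(t)\neq 0\}$. A map is sequentially continuous if it sends convergent sequences to convergent sequences. *)

From HB Require Import structures.
From mathcomp Require Import all_boot all_order all_algebra.
From mathcomp Require Import all_classical all_reals all_analysis.
Set Implicit Arguments. Unset Strict Implicit. Unset Printing Implicit Defensive.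
Import Order.TTheory GRing.Theory Num.Theory.
Import numFieldNormedType.Exports.
Local Open Scope classical_set_scope.
Local Open Scope ring_scope.

Definition tychonoff_space (R : realType) (X : topologicalType) : Prop :=
  accessible_space X /\
  forall (a : X) (B : set X), closed B -> ~ B a ->
    exists f : X -> R, continuous f /\ (forall x, 0 <= f x <= 1) /\
      f a = 0 /\ (forall b, B b -> f b = 1).

Definition supp (X : Type) (R : realType) (f : X -> R) : set X :=
  [set t | f t != 0].

Definition cvg_pointwise (X : Type) (R : realType)
    (u : nat -> X -> R) (f : X -> R) : Prop :=
  forall x, (fun k => u k x) @ \oo --> f x.

Definition cont_lin_functional (R : realType) (E : normedModType R)
    (phi : E -> R) : Prop :=
  continuous phi /\ forall (a : R) (u v : E), phi (a *: u + v) = a * phi u + phi v.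

Definition cvg_weak (R : realType) (E : normedModType R)
    (u : nat -> E) (l : E) : Prop :=
  forall phi : E -> R, cont_lin_functional phi -> (fun k => phi (u k)) @ \oo --> phi l.

(* Suppose no N works. Then there are continuous f_k supported in U_(n_k) with
   k <= n_k and T f_k <> 0; since the U_n are disjoint, every rescaling c_k f_k
   tends to 0 pointwise. Norming functionals psi_k of the T f_k (Hahn-Banach, by
   Zorn's lemma) combine into one continuous functional phi = sum_k +-3^-k psi_k
   with phi (T f_k) <> 0 for all k, the signs being chosen inductively so that no
   cancellation occurs. Then phi (T (f_k / phi (T f_k))) = 1 for all k, against
   the weak sequential continuity of T. *)

From HB Require Import structures.
From mathcomp Require Import all_boot all_order all_algebra.
From mathcomp Require Import all_classical all_reals all_analysis.
From mathcomp Require Import ring lra.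
Set Implicit Arguments. Unset Strict Implicit. Unset Printing Implicit Defensive.
Import Order.TTheory GRing.Theory Num.Theory.
Import numFieldNormedType.Exports.
Local Open Scope classical_set_scope.
Local Open Scope ring_scope.

Section NormingFunctional.
Context {R : realType} {E : normedModType R}.

Definition linear_form (phi : E -> R) : Prop :=
  forall (a : R) (u v : E), phi (a *: u + v) = a * phi u + phi v.

Lemma linear_form0 phi : linear_form phi -> phi 0 = 0.
Proof.
move=> lin; have := lin 1 0 0.
by rewrite scale1r addr0 mul1r -{1}[phi 0]addr0 => /addrI <-.
Qed.

Lemma linear_formZ phi (a : R) u : linear_form phi -> phi (a *: u) = a * phi u.
Proof. by move=> lin; rewrite -[a *: u]addr0 lin linear_form0 ?addr0. Qed.

(* Partial linear functionals dominated by the norm, encoded by their graphs so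
   that a chain of them is joined by taking the union. *)
Record dominated_graph (G : set (E * R)) : Prop := DominatedGraph {
  dgraph_fun : forall v r s, G (v, r) -> G (v, s) -> r = s;
  dgraph_lin : forall (a : R) p q, G p -> G q -> G (a *: p.1 + q.1, a * p.2 + q.2);
  dgraph_le_norm : forall v r, G (v, r) -> r <= `|v| }.

Lemma dominated_graph_bigcup (F : set (set (E * R))) :
  F `<=` dominated_graph -> total_on F subset ->
  dominated_graph (\bigcup_(G in F) G).
Proof.
move=> Fd Ftot.
have common p q : (\bigcup_(G in F) G) p -> (\bigcup_(G in F) G) q ->
    exists2 G, F G & G p /\ G q.
  move=> [G FG Gp] [H FH Hq].
  case: (Ftot G H FG FH) => [GH | HG].
  - by exists H => //; split => //; exact: GH.
  - by exists G => //; split => //; exact: HG.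
split.
- move=> v r s vr vs; have [G FG [Gr Gs]] := common _ _ vr vs.
  exact: dgraph_fun (Fd G FG) _ _ _ Gr Gs.
- move=> a p q up uq; have [G FG [Gp Gq]] := common _ _ up uq.
  by exists G => //; exact: dgraph_lin (Fd G FG) _ _ _ Gp Gq.
- by move=> v r [G FG Gr]; exact: dgraph_le_norm (Fd G FG) _ _ Gr.
Qed.

Lemma dominated_graph_line (x : E) :
  dominated_graph [set (t *: x, t * `|x|) | t in [set: R]].
Proof.
split.
- move=> v r s [t _ [<- <-]] [u _ [tux <-]].
  have [->|x0] := eqVneq x 0; first by rewrite normr0 !mulr0.
  by move/eqP: tux; rewrite -subr_eq0 -scalerBl scaler_eq0 (negbTE x0) orbF
    subr_eq0 => /eqP ->.
- move=> a _ _ [t _ <-] [u _ <-] /=; exists (a * t + u) => //.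
  by rewrite scalerDl scalerA mulrDl mulrA.
- move=> v r [t _ [<- <-]]; rewrite normrZ.
  by apply: ler_wpM2r => //; exact: ler_norm.
Qed.

Section Extension.
Variables (G : set (E * R)) (dG : dominated_graph G).

Lemma dgraph00 p : G p -> G (0, 0).
Proof.
by move=> Gp; have := dgraph_lin dG (-1) Gp Gp; rewrite scaleN1r mulN1r !addNr.
Qed.

Lemma dgraphZ (a : R) d r : G (d, r) -> G (a *: d, a * r).
Proof.
by move=> Gdr; have := dgraph_lin dG a Gdr (dgraph00 Gdr); rewrite /= !addr0.
Qed.

Lemma dgraphD d r e s : G (d, r) -> G (e, s) -> G (d + e, r + s).
Proof.
by move=> Gdr Ges; have := dgraph_lin dG 1 Gdr Ges; rewrite /= scale1r mul1r.
Qed.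

Lemma exists_extension_value (x0 : E) : G (0, 0) ->
  exists c : R, forall d r, G (d, r) -> r + c <= `|d + x0| /\ r - c <= `|d - x0|.
Proof.
move=> G00.
have sep d r e s : G (d, r) -> G (e, s) -> r - `|d - x0| <= `|e + x0| - s.
  move=> Gdr Ges; have := dgraph_le_norm dG (dgraphD Gdr Ges).
  have := ler_normD (d - x0) (e + x0); rewrite addrACA addNr addr0; lra.
pose S := [set y | exists d r, G (d, r) /\ y = r - `|d - x0|].
have S_sup : has_sup S.
  split; first by exists (0 - `|0 - x0|), 0, 0.
  by exists (`|0 + x0| - 0) => _ [d [r [Gdr ->]]]; exact: sep.
exists (sup S) => d r Gdr; split.
- have : sup S <= `|d + x0| - r.
    by apply: ge_sup => [|_ [e [s [Ges ->]]]]; [case: S_sup | exact: sep].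
  lra.
- have : r - `|d - x0| <= sup S by apply: sup_upper_bound => //; exists d, r.
  lra.
Qed.

Definition graph_extension (x0 : E) (c : R) : set (E * R) :=
  [set p | exists d r t, G (d, r) /\ p = (d + t *: x0, r + t * c)].

Lemma sub_graph_extension x0 c : G `<=` graph_extension x0 c.
Proof. by move=> [d r] Gdr; exists d, r, 0; rewrite scale0r mul0r !addr0. Qed.

Lemma graph_extension_fun x0 c : (forall r, ~ G (x0, r)) ->
  forall v r s, graph_extension x0 c (v, r) -> graph_extension x0 c (v, s) -> r = s.
Proof.
move=> Gx0 v _ _ [d1 [r1 [t1 [G1 [-> ->]]]]] [d2 [r2 [t2 [G2 [e ->]]]]].
have [tt|t12] := eqVneq t1 t2.
  by move: e; rewrite tt => /addIr d12; subst d2; rewrite (dgraph_fun dG G1 G2).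
have : G ((t1 - t2)^-1 *: (d2 - d1), (t1 - t2)^-1 * (r2 - r1)).
  by apply/dgraphZ/dgraphD => //; have := dgraphZ (-1) G1; rewrite scaleN1r mulN1r.
suff -> : (t1 - t2)^-1 *: (d2 - d1) = x0 by move/Gx0.
have -> : d2 - d1 = (t1 - t2) *: x0.
  by rewrite scalerBl -[d2](addrK (t2 *: x0)) -e addrAC [d1 + _]addrC addrK.
by rewrite scalerA mulVf ?subr_eq0 // scale1r.
Qed.

Lemma graph_extension_lin x0 c (a : R) p q :
  graph_extension x0 c p -> graph_extension x0 c q ->
  graph_extension x0 c (a *: p.1 + q.1, a * p.2 + q.2).
Proof.
move=> [d1 [r1 [t1 [G1 ->]]]] [d2 [r2 [t2 [G2 ->]]]] /=.
exists (a *: d1 + d2), (a * r1 + r2), (a * t1 + t2); split.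
  exact: (dgraph_lin dG a G1 G2).
congr pair; last by ring.
by rewrite scalerDr scalerA scalerDl addrACA.
Qed.

Lemma le_norm_add_scale x0 c :
  (forall d r, G (d, r) -> r + c <= `|d + x0|) ->
  forall t, 0 < t -> forall d r, G (d, r) -> r + t * c <= `|d + t *: x0|.
Proof.
move=> Hc t t0 d r Gdr; have := Hc _ _ (dgraphZ t^-1 Gdr).
have -> : `|d + t *: x0| = t * `|t^-1 *: d + x0|.
  by rewrite -[t in t * _]gtr0_norm // -normrZ scalerDr scalerA mulfV ?gt_eqF // scale1r.
by rewrite -(ler_pM2l t0) mulrDr mulrA mulfV ?gt_eqF // mul1r.
Qed.

Lemma graph_extension_le_norm x0 c :
  (forall d r, G (d, r) -> r + c <= `|d + x0| /\ r - c <= `|d - x0|) ->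
  forall v r, graph_extension x0 c (v, r) -> r <= `|v|.
Proof.
move=> Hc _ _ [d [r [t [Gdr [-> ->]]]]].
case: (ltrgtP t 0) => [tneg|tpos|->].
- have tpos : 0 < - t by rewrite oppr_gt0.
  have := le_norm_add_scale (fun e s Ges => proj2 (Hc e s Ges)) tpos Gdr.
  by rewrite mulrNN scaleNr scalerN opprK.
- exact: (le_norm_add_scale (fun e s Ges => proj1 (Hc e s Ges)) tpos Gdr).
- by rewrite scale0r mul0r !addr0; exact: dgraph_le_norm dG _ _ Gdr.
Qed.

Lemma dominated_graph_extend x0 : G (0, 0) -> (forall r, ~ G (x0, r)) ->
  exists2 B, dominated_graph B & G `<` B.
Proof.
move=> G00 Gx0; have [c Hc] := exists_extension_value x0 G00.
exists (graph_extension x0 c).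
  split; [exact: graph_extension_fun | exact: graph_extension_lin |].
  exact: graph_extension_le_norm.
split; first exact: sub_graph_extension.
move=> /(_ (x0, c)) extG; apply: (Gx0 c); apply: extG.
by exists 0, 0, 1; rewrite scale1r mul1r !add0r.
Qed.

End Extension.

Lemma norming_functional (x : E) : exists psi : E -> R,
  [/\ linear_form psi, forall v, `|psi v| <= `|v| & psi x = `|x|].
Proof.
(* [Zorn_bigcup] also forms the union of the empty chain, so [set0] must be admitted. *)
pose P G := dominated_graph G /\ (G !=set0 -> G (x, `|x|)).
have [A [[dA Ax] maxA]] : exists A, P A /\ forall B, A `<` B -> ~ P B.
  apply: Zorn_bigcup => F FP Ftot; split.
    by apply: dominated_graph_bigcup => // G /FP[].
  by move=> [p [G FG Gp]]; exists G => //; apply: (FP G FG).2; exists p.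
pose line := [set (t *: x, t * `|x|) | t in [set: R]].
have Axx : A (x, `|x|).
  apply: Ax; apply/set0P/eqP => A0; apply: (maxA line).
    rewrite A0; split => // /(_ (x, `|x|)); apply.
    by exists 1 => //; rewrite scale1r mul1r.
  split=> [|_]; first exact: dominated_graph_line.
  by exists 1 => //; rewrite scale1r mul1r.
have Afull v : exists r, A (v, r).
  apply: contrapT => nAv; have Av r : ~ A (v, r) by move=> Avr; apply: nAv; exists r.
  have [B dB AB] := dominated_graph_extend dA (dgraph00 dA Axx) Av.
  by apply: (maxA B AB); split=> // _; exact: (properW AB).
pose psi v := xget 0 [set r | A (v, r)].
have Apsi v : A (v, psi v) := xgetPex 0 (Afull v).
exists psi; split.
- move=> a u v; apply: (dgraph_fun dA (Apsi _)).
  exact: (dgraph_lin dA a (Apsi u) (Apsi v)).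
- move=> v; rewrite ler_norml (dgraph_le_norm dA (Apsi v)) andbT lerNl.
  have := dgraph_le_norm dA (dgraphZ dA (-1) (Apsi v)).
  by rewrite scaleN1r mulN1r normrN.
- exact: (dgraph_fun dA (Apsi x) Axx).
Qed.

End NormingFunctional.

Lemma linear_form_bounded_continuous (R : realType) (E : normedModType R)
    (phi : E -> R) (C : R) :
  0 < C -> linear_form phi -> (forall v, `|phi v| <= C * `|v|) -> continuous phi.
Proof.
move=> C0 lin bnd v; apply/cvgrPdist_le => e e0.
have phiB w : phi v - phi w = phi (v - w).
  by have := lin 1 (v - w) w; rewrite scale1r mul1r subrK => ->; rewrite addrK.
have : \forall w \near v, `|v - w| <= C^-1 * e.
  by apply: cvgr_dist_le; [exact: cvg_id | rewrite mulr_gt0 // invr_gt0].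
apply: filterS => w /= vw; rewrite phiB; apply: le_trans (bnd _) _.
by rewrite -ler_pdivlMl.
Qed.

Lemma normr_add_sign (R : realDomainType) (a b : R) :
  0 <= b -> `|a + (if 0 <= a then 1 else -1) * b| = `|a| + b.
Proof.
move=> b0; case: ifPn => [a0|]; first by rewrite mul1r !ger0_norm ?addr_ge0.
by rewrite -ltNge => a0; rewrite mulN1r (ltr0_norm a0) ltr0_norm; lra.
Qed.

Lemma series_tail_le (R : realType) (a : R ^nat) (C q : R) :
  0 <= q -> 2 * q <= 1 -> (forall n, `|a n| <= C * q ^+ n) ->
  cvgn (series a) /\ forall m, `|limn (series a) - series a m| <= 2 * C * q ^+ m.
Proof.
move=> q0 q_half a_le.
have Cq0 n : 0 <= C * q ^+ n by apply: le_trans (a_le n).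
have a_cvg : cvgn (series a).
  apply: normed_cvg; apply: (@series_le_cvg _ _ (geometric C q)).
  - by move=> n; exact: normr_ge0.
  - exact: Cq0.
  - exact: a_le.
  - by apply: is_cvg_geometric_series; rewrite ger0_norm; lra.
split=> // m.
have partial_le k : `|series a (m + k)%N - series a m| + 2 * C * q ^+ (m + k) <= 2 * C * q ^+ m.
  elim: k => [|k IHk]; first by rewrite addn0 subrr normr0 add0r.
  rewrite addnS seriesSr addrAC exprSr.
  have := ler_normD (series a (m + k)%N - series a m) (a (m + k)%N).
  have := a_le (m + k)%N; have := Cq0 (m + k)%N; nra.
have dist_cvg : `|series a n - series a m| @[n --> \oo] --> `|limn (series a) - series a m|.
  by apply: cvg_norm; apply: cvgB => //; exact: cvg_cst.
rewrite -(cvg_lim _ dist_cvg) //; apply: limr_le; first exact: cvgP dist_cvg.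
near=> n; have mn : (m <= n)%N by near: n; exact: nbhs_infty_ge.
rewrite -(subnKC mn); have := partial_le (n - m)%N; have := Cq0 (m + (n - m))%N; lra.
Unshelve. all: end_near.
Qed.

Section SeparatingFunctional.
Variables (R : realType) (E : normedModType R) (psi : nat -> E -> R) (y : nat -> E).
Hypotheses (psi_lin : forall n, linear_form (psi n))
  (psi_le : forall n v, `|psi n v| <= `|v|) (psi_y : forall n, psi n (y n) = `|y n|).

(* The sign gives [|partial_form m.+1 (y m)| >= 3^-m |y m|], which beats the
   tail [2/3 * 3^-m |y m|] of the series. *)
Fixpoint partial_form (n : nat) (v : E) : R :=
  if n is m.+1 then
    partial_form m v + (if 0 <= partial_form m (y m) then 1 else -1) * 3^-1 ^+ m * psi m v
  else 0.

Let term n v := (if 0 <= partial_form n (y n) then 1 else -1) * 3^-1 ^+ n * psi n v.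

Let partial_formE n v : partial_form n v = series (term ^~ v) n.
Proof.
elim: n => [|n IHn]; first by rewrite /series /= big_geq.
by rewrite seriesSr -IHn.
Qed.

Let term_le n v : `|term n v| <= `|v| * 3^-1 ^+ n.
Proof.
rewrite /term; case: ifP => _; rewrite !normrM ?normrN normr1 mul1r normrX.
all: by rewrite ger0_norm ?invr_ge0 // mulrC ler_wpM2r ?exprn_ge0 ?invr_ge0.
Qed.

Definition limit_form (v : E) : R := limn (partial_form ^~ v).

Let limit_form_tail v : cvgn (partial_form ^~ v) /\
  forall m, `|limit_form v - partial_form m v| <= 2 * `|v| * 3^-1 ^+ m.
Proof.
have [||n|s_cvg s_tail] := @series_tail_le R (term ^~ v) `|v| 3^-1.
- by rewrite invr_ge0.
- lra.
- exact: term_le.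
rewrite /limit_form (funext (partial_formE ^~ v)); split=> // m.
by rewrite partial_formE; exact: s_tail.
Qed.

Lemma partial_form_linear n : linear_form (partial_form n).
Proof. by elim: n => [|n IHn] a u v /=; rewrite ?mulr0 ?addr0 // IHn psi_lin; ring. Qed.

Lemma limit_form_linear : linear_form limit_form.
Proof.
move=> a u v; have [u_cvg _] := limit_form_tail u; have [v_cvg _] := limit_form_tail v.
rewrite /limit_form (funext (fun n => partial_form_linear n a u v)).
by apply: cvg_lim => //; apply: cvgD => //; apply: cvgM => //; exact: cvg_cst.
Qed.

Lemma limit_form_continuous : continuous limit_form.
Proof.
apply: (linear_form_bounded_continuous (C := 2)) => // [|v]; first exact: limit_form_linear.
by have [_ /(_ 0%N)] := limit_form_tail v; rewrite subr0 expr0 mulr1.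
Qed.

Lemma limit_form_neq0 j : y j != 0 -> limit_form (y j) != 0.
Proof.
move=> yj0.
have step : `|partial_form j.+1 (y j)| = `|partial_form j (y j)| + 3^-1 ^+ j * `|y j|.
  by rewrite /= psi_y -mulrA normr_add_sign // mulr_ge0 ?exprn_ge0 ?invr_ge0.
have [_ /(_ j.+1)] := limit_form_tail (y j).
apply: contraTneq => ->; rewrite sub0r normrN step -ltNge exprSr.
have : 0 < 3^-1 ^+ j * `|y j| by rewrite mulr_gt0 ?normr_gt0 ?exprn_gt0 ?invr_gt0.
have := normr_ge0 (partial_form j (y j)); nra.
Qed.

End SeparatingFunctional.

Lemma separating_functional (R : realType) (E : normedModType R) (y : nat -> E) :
  (forall j, y j != 0) ->
  exists phi : E -> R, cont_lin_functional phi /\ forall j, phi (y j) != 0.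
Proof.
move=> y_neq0; have [psi psiP] := choice (fun j => norming_functional (y j)).
have psi_lin n : linear_form (psi n) by case: (psiP n).
have psi_le n : forall v, `|psi n v| <= `|v| by case: (psiP n).
have psi_y n : psi n (y n) = `|y n| by case: (psiP n).
exists (limit_form psi y); split; first split.
- exact: limit_form_continuous.
- exact: limit_form_linear.
- by move=> j; exact: limit_form_neq0.
Qed.

Lemma supp_scale (X : Type) (R : realType) (a : R) (f : X -> R) :
  supp (a *: f) `<=` supp f.
Proof. by move=> x; rewrite /supp /= scaler_eq0 negb_or => /andP[]. Qed.

Lemma cvg_pointwise_disjoint_supports (X : Type) (R : realType) (U : nat -> set X)
    (n : nat -> nat) (u : nat -> X -> R) :
  (forall m p, m <> p -> U m `&` U p = set0) -> (forall k, (k <= n k)%N) ->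
  (forall k, supp (u k) `<=` U (n k)) -> cvg_pointwise u 0.
Proof.
move=> Udisj kn supp_u x; apply: cvg_near_cst.
have [[m Umx]|noU] := pselect (exists m, U m x); last first.
  near=> k; apply: contrapT => /eqP ukx; apply: noU; exists (n k); exact: supp_u.
near=> k; apply: contrapT => /eqP /supp_u Unx.
have mk : (m < k)%N by near: k; exact: nbhs_infty_gt.
have mn : n k <> m by move=> nm; have := leq_trans mk (kn k); rewrite nm ltnn.
by have := Udisj _ _ mn; rewrite -subset0 => /(_ x); apply.
Unshelve. all: end_near.
Qed.

Section SequentiallyContinuousOperator.
Variables (R : realType) (X : topologicalType) (E : normedModType R)
  (T : (X -> R) -> E).
Hypotheses (T_lin : forall (a : R) (f g : X -> R), continuous f -> continuous g ->
     T (a *: f + g) = a *: T f + T g)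
  (T_seqcont : forall (u : nat -> X -> R) (f : X -> R),
     (forall k, continuous (u k)) -> continuous f ->
     cvg_pointwise u f -> cvg_weak (fun k => T (u k)) (T f)).

Let zero_continuous : continuous (0 : X -> R).
Proof. exact: cst_continuous. Qed.

Let T0 : T 0 = 0.
Proof.
have := T_lin 1 zero_continuous zero_continuous.
by rewrite !scale1r addr0 -{1}[T 0]addr0 => /addrI <-.
Qed.

Let TZ (a : R) f : continuous f -> T (a *: f) = a *: T f.
Proof. by move=> fc; rewrite -[a *: f]addr0 T_lin ?T0 ?addr0. Qed.

Lemma exists_image_eq0 (f : nat -> X -> R) : (forall k, continuous (f k)) ->
  (forall c : nat -> R, cvg_pointwise (fun k => c k *: f k) 0) ->
  exists k, T (f k) = 0.
Proof.
move=> fc cvg_scaled; apply: contrapT => /forallNP Tf_neq0.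
have [phi [[phi_cont phi_lin] phi_neq0]] :=
  separating_functional (fun k => introN eqP (Tf_neq0 k)).
pose c k := (phi (T (f k)))^-1.
have scaled_cont k : continuous (c k *: f k).
  by move=> x; apply: cvgM; [exact: cvg_cst | exact: fc].
have := T_seqcont scaled_cont zero_continuous (cvg_scaled c) (conj phi_cont phi_lin).
rewrite T0 linear_form0 //.
have -> : (fun k => phi (T (c k *: f k))) = fun=> 1.
  by apply: funext => k; rewrite TZ // linear_formZ // mulVf.
by move/cvg_lim; rewrite lim_cst // => /(_ (@Rhausdorff R))/eqP; rewrite oner_eq0.
Qed.

Lemma disjoint_supports_image_eq0 (U : nat -> set X) :
  (forall n m, n <> m -> U n `&` U m = set0) ->
  exists N, forall n, (N <= n)%N ->
    forall f, continuous f -> supp f `<=` U n -> T f = 0.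
Proof.
move=> U_disj; apply: contrapT => /forallNP no_N.
have /choice[n nP] N : exists n, (N <= n)%N /\
    exists f, [/\ continuous f, supp f `<=` U n & T f <> 0].
  have /existsNP[n /not_implyP[Nn /existsNP[f /not_implyP[fc /not_implyP[fU Tf]]]]] :=
    no_N N.
  by exists n; split=> //; exists f.
have [f fP] := choice (fun k => (nP k).2).
have [k Tk] : exists k, T (f k) = 0.
  apply: exists_image_eq0 => [k|c]; first by case: (fP k).
  apply: (cvg_pointwise_disjoint_supports U_disj (fun k => (nP k).1)) => k x sx.
  by case: (fP k) => _ fU _; apply: fU; exact: supp_scale sx.
by case: (fP k).
Qed.

End SequentiallyContinuousOperator.

Theorem lemma2p1 (R : realType) (X : topologicalType)
  (E : completeNormedModType R) (T : (X -> R) -> E) :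
  tychonoff_space R X ->
  ~ finite_set [set: X] ->
  (* T is linear on C(X) *)
  (forall (a : R) (f g : X -> R), continuous f -> continuous g ->
     T (a *: f + g) = a *: T f + T g) ->
  (* T : C_p(X) -> E_w is sequentially continuous *)
  (forall (u : nat -> X -> R) (f : X -> R),
     (forall k, continuous (u k)) -> continuous f ->
     cvg_pointwise u f -> cvg_weak (fun k => T (u k)) (T f)) ->
  forall U : nat -> set X,
    (forall n, open (U n)) -> (forall n, U n !=set0) ->
    (forall n m, n <> m -> U n `&` U m = set0) ->
    exists N : nat, forall n : nat, (N <= n)%N ->
      forall f : X -> R, continuous f -> supp f `<=` U n -> T f = 0.
Proof.
by move=> _ _ T_lin T_seqcont U _ _; exact: disjoint_supports_image_eq0.
Qed.
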